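(* Let $U$ be a matchgate unitary on $n$ qubits, let $B=i^bC_{\vec\alpha}$ be a Hermitian Pauli observable (with $\vec\alpha$ a Majorana configuration and $b$ an integer), and let $S\subseteq\{1,\dots,n\}$. For each $s\in S$ let $\mathbf n_s\in\mathbb R^3$ be a unit vector and define the $3\times 3$ matrix $\mathbf M_s$ by the requirement that $\frac{1}{2^{n+2}}\|[\mathbf n\cdot\boldsymbol\sigma_s,U^\dagger BU]\|^2=\mathbf n^*\cdot\mathbf M_s\cdot\mathbf n$ for all $\mathbf n$. For each qubit $j\in\{1,\dots,n\}$ choose a unit Bloch vector $\mathbf n^\perp_j$, with $\mathbf n^\perp_j\perp\mathbf n_j$ for $j\in S$, and consider the product basis $\{\otimes_{j=1}^n|(-1)^{\ell_j}\mathbf n_j^\perp\rangle\}_{\boldsymbol\ell\in\{0,1\}^n}$, where $|\mathbf m\rangle$ denotes the single-qubit pure state with Bloch vector $\mathbf m$. Then $$\overline{\big|\langle U^\dagger BU\rangle-\langle(\otimes_{s\in S}\mathcal E_s)[U^\dagger BU]\rangle\big|}\le\sum_{s\in S}\sqrt{\mathbf n_s^*\cdot\mathbf M_s\cdot\mathbf n_s},$$ where $\overline{(\cdot)}$ denotes the uniform average over the $2^n$ states of this product basis (expectation values taken in each basis state), and $\mathcal E_s$ is the completely depolarizing channel on qubit $s$, $\mathcal E_s(O)=\frac14\big(O+\sum_{k\in\{x,y,z\}}\sigma^k_sO\sigma^k_s\big)$.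
   Context: On $n$ qubits, $\boldsymbol\sigma_s=(\sigma^x_s,\sigma^y_s,\sigma^z_s)=(X_s,Y_s,Z_s)$ are the Pauli operators on qubit $s$ and $\mathbf n\cdot\boldsymbol\sigma_s=\sum_k n_k\sigma^k_s$. Majorana operators: $c_{2k-1}=Z_1\cdots Z_{k-1}X_k$, $c_{2k}=Z_1\cdots Z_{k-1}Y_k$. A Majorana configuration is an ordered tuple $\vec\alpha=(\alpha_1<\dots<\alpha_k)$ with entries in $\{1,\dots,2n\}$, and $C_{\vec\alpha}=c_{\alpha_1}\cdots c_{\alpha_k}$. A matchgate unitary is a unitary $U$ on $n$ qubits for which there is $\mathbf u\in\mathbf{SO}(2n)$ with $U^\dagger c_\mu U=\sum_\nu u_{\mu\nu}c_\nu$ for all $\mu$. $\|O\|^2=\mathrm{tr}(O^\dagger O)$ is the Frobenius norm. *)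

From HB Require Import structures.
From mathcomp Require Import all_boot all_order all_algebra.
From mathcomp Require Import reals complex.
Set Implicit Arguments. Unset Strict Implicit. Unset Printing Implicit Defensive.
Import Order.TTheory GRing.Theory Num.Theory.
Local Open Scope ring_scope.

Section Qubits.
Variable R : realType.
Local Notation C := (R[i]).

(* Computational basis of n qubits: index i : 'I_(2^n); bit k of i is the state of qubit k
   (qubits are 0-indexed: qubit k here is qubit k+1 of the paper). *)
Definition bit (n : nat) (i : 'I_(2 ^ n)) (k : 'I_n) : 'I_2 := inord (odd (i %/ 2 ^ k)).

Definition tensorn (n : nat) (A : 'I_n -> 'M[C]_2) : 'M[C]_(2 ^ n) :=
  \matrix_(i, j) \prod_(k < n) A k (bit i k) (bit j k).

Definition on_qubit (n : nat) (k : 'I_n) (A : 'M[C]_2) : 'M[C]_(2 ^ n) :=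
  tensorn (fun l => if l == k then A else 1%:M).

Definition pauliX : 'M[C]_2 := \matrix_(i, j) (if i != j then 1 else 0).
Definition pauliY : 'M[C]_2 :=
  \matrix_(i, j) (if i == j then 0 else if (i : nat) == 0%N then - 'i else 'i).
Definition pauliZ : 'M[C]_2 :=
  \matrix_(i, j) (if i == j then (if (i : nat) == 0%N then 1 else -1) else 0).
Definition pauli (a : 'I_3) : 'M[C]_2 :=
  if (a : nat) == 0%N then pauliX else if (a : nat) == 1%N then pauliY else pauliZ.

Definition sigma (n : nat) (s : 'I_n) (a : 'I_3) : 'M[C]_(2 ^ n) := on_qubit s (pauli a).

Definition ndot1 (v : 'I_3 -> C) : 'M[C]_2 := \sum_(a < 3) v a *: pauli a.
Definition ndot (n : nat) (v : 'I_3 -> C) (s : 'I_n) : 'M[C]_(2 ^ n) :=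
  \sum_(a < 3) v a *: sigma s a.

Definition adj (m : nat) (A : 'M[C]_m) : 'M[C]_m := (map_mx Num.conj A)^T.
Definition comm (m : nat) (A B : 'M[C]_m) : 'M[C]_m := A *m B - B *m A.
Definition frob2 (m : nat) (A : 'M[C]_m) : C := \tr (adj A *m A).

Definition mxprod (m : nat) (s : seq 'M[C]_m) : 'M[C]_m := foldr (@mulmx C m m m) 1%:M s.

(* Majorana operators (0-indexed, mu : 'I_(2n)):
   c_mu = Z_0 ... Z_{q-1} X_q if mu = 2q, and Z_0 ... Z_{q-1} Y_q if mu = 2q+1
   (this is c_{2k-1}, c_{2k} of the paper with k = q+1). *)
Definition majorana (n : nat) (mu : 'I_(2 * n)) : 'M[C]_(2 ^ n) :=
  tensorn (fun l : 'I_n =>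
    if (l < mu %/ 2)%N then pauliZ
    else if (l : nat) == (mu %/ 2)%N then (if odd mu then pauliY else pauliX)
    else 1%:M).

(* C_alpha = c_{alpha_1} ... c_{alpha_k} for a Majorana configuration alpha_1 < ... < alpha_k,
   represented as the set {alpha_1, ..., alpha_k}; enum lists it in increasing order. *)
Definition majorana_conf (n : nat) (A : {set 'I_(2 * n)}) : 'M[C]_(2 ^ n) :=
  mxprod [seq majorana mu | mu <- enum A].

Definition unitary (m : nat) (U : 'M[C]_m) : Prop :=
  adj U *m U = 1%:M /\ U *m adj U = 1%:M.

Definition matchgate (n : nat) (U : 'M[C]_(2 ^ n)) : Prop :=
  unitary U /\
  exists u : 'M[R]_(2 * n),
    u^T *m u = 1%:M /\ \det u = 1 /\
    forall mu : 'I_(2 * n),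
      adj U *m majorana mu *m U = \sum_(nu < 2 * n) (u mu nu)%:C%C *: majorana nu.

Definition qform (v : 'I_3 -> C) (M : 'M[C]_3) : C :=
  \sum_(a < 3) \sum_(b < 3) Num.conj (v a) * M a b * v b.

Definition depol (n : nat) (s : 'I_n) (O : 'M[C]_(2 ^ n)) : 'M[C]_(2 ^ n) :=
  4%:R^-1 *: (O + \sum_(a < 3) sigma s a *m O *m sigma s a).
Definition depolS (n : nat) (S : {set 'I_n}) (O : 'M[C]_(2 ^ n)) : 'M[C]_(2 ^ n) :=
  foldr (@depol n) O (enum S).

Definition bloch_state (m : 'I_3 -> R) : 'M[C]_2 :=
  2%:R^-1 *: (1%:M + ndot1 (fun a => (m a)%:C%C)).

Definition basis_state (n : nat) (nperp : 'I_n -> 'I_3 -> R) (l : {ffun 'I_n -> bool}) :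
  'M[C]_(2 ^ n) :=
  tensorn (fun j => bloch_state (fun a => (-1) ^+ l j * nperp j a)).

Definition expv (m : nat) (rho O : 'M[C]_m) : C := \tr (rho *m O).

Definition unit3 (v : 'I_3 -> R) : Prop := \sum_(a < 3) v a ^+ 2 = 1.
Definition dot3 (v w : 'I_3 -> R) : R := \sum_(a < 3) v a * w a.

End Qubits.

Arguments tensorn {R n}. Arguments on_qubit {R n}. Arguments pauliX {R}. Arguments pauliY {R}.
Arguments pauliZ {R}. Arguments pauli {R}. Arguments sigma {R n}. Arguments ndot1 {R}.
Arguments ndot {R n}. Arguments adj {R m}. Arguments comm {R m}. Arguments frob2 {R m}.
Arguments mxprod {R m}. Arguments majorana {R n}. Arguments majorana_conf {R n}.
Arguments unitary {R m}. Arguments matchgate {R n}. Arguments qform {R}.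
Arguments depol {R n}. Arguments depolS {R n}. Arguments bloch_state {R}.
Arguments basis_state {R n}. Arguments expv {R m}. Arguments unit3 {R}. Arguments dot3 {R}.

From HB Require Import structures.
From mathcomp Require Import all_boot all_order all_algebra.
From mathcomp Require Import reals complex.
From mathcomp Require Import ring.
Set Implicit Arguments. Unset Strict Implicit. Unset Printing Implicit Defensive.
Import Order.TTheory GRing.Theory Num.Theory.
Local Open Scope ring_scope.

(* The depolarizing channel E_s is self-dual for the trace pairing, and on a product-basis
   state rho_l whose factor on qubit s has Bloch vector orthogonal to n_s it acts as the
   pinching rho -> (rho + P rho P) / 2 with P = n_s.sigma_s, because conjugation by P sends
   that Bloch vector to its antipode.  Hence <Y>_l - <E_s Y>_l = tr (rho_l (Y - P Y P)) / 2.
   The rho_l are orthogonal rank-one projections summing to 1, so Cauchy-Schwarz and Bessel's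
   inequality bound the basis average of |.| by (2^(n+2))^(-1/2) ||Y - P Y P||, and
   ||Y - P Y P|| = ||[P, Y]|| since P is a Hermitian unitary.  Depolarizing the other qubits
   commutes with [P, .] and does not increase the Frobenius norm, so telescoping over S gives
   the bound. *)

Lemma binary_expansion n i : (i < 2 ^ n)%N ->
  i = (\sum_(k < n) odd (i %/ 2 ^ k) * 2 ^ k)%N.
Proof.
elim: n i => [|n IH] i lti; first by rewrite big_ord0; move: lti; rewrite expn0; case: i.
have lt_half : (i %/ 2 < 2 ^ n)%N by rewrite ltn_divLR // mulnC -expnS.
rewrite big_ord_recl /= expn0 divn1 muln1.
transitivity (odd i + i %/ 2 * 2)%N; first by rewrite divn2 muln2 odd_double_half.
congr (_ + _)%N; rewrite {1}(IH _ lt_half) big_distrl /=; apply: eq_bigr => k _.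
by rewrite /bump /= add1n expnS divnMA -mulnA (mulnC 2).
Qed.

Section TensorProduct.
Variable R : realType.
Local Notation C := (R[i]).
Variable n : nat.

Definition bits (i : 'I_(2 ^ n)) : {ffun 'I_n -> 'I_2} := [ffun k => bit i k].

Lemma bitE (i : 'I_(2 ^ n)) k : bit i k = odd (i %/ 2 ^ k) :> nat.
Proof. by rewrite /bit inordK // ltnS leq_b1. Qed.

Lemma bits_bij : bijective bits.
Proof.
apply: inj_card_bij; last by rewrite card_ffun !card_ord.
move=> i j /ffunP eq_ij; apply: val_inj.
rewrite /= (binary_expansion (ltn_ord i)) (binary_expansion (ltn_ord j)).
by apply: eq_bigr => k _; have := eq_ij k; rewrite !ffunE -!bitE => ->.
Qed.

Lemma sum_prod_bits (F : 'I_n -> 'I_2 -> C) :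
  \sum_(i < 2 ^ n) \prod_k F k (bit i k) = \prod_k \sum_(b < 2) F k b.
Proof.
rewrite bigA_distr_bigA /= (reindex bits) /=; last exact/onW_bij/bits_bij.
by apply: eq_bigr => i _; apply: eq_bigr => k _; rewrite ffunE.
Qed.

Lemma eq_tensorn (f g : 'I_n -> 'M[C]_2) : f =1 g -> tensorn f = tensorn g.
Proof.
by move=> fg; apply/matrixP => i j; rewrite !mxE; apply: eq_bigr => k _; rewrite fg.
Qed.

Lemma tensornM (f g : 'I_n -> 'M[C]_2) :
  tensorn f *m tensorn g = tensorn (fun k => f k *m g k).
Proof.
apply/matrixP => i j; rewrite !mxE.
under eq_bigr do rewrite ?mxE -big_split /=.
rewrite (sum_prod_bits (fun k b => f k (bit i k) b * g k b (bit j k))).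
by apply: eq_bigr => k _; rewrite mxE.
Qed.

Lemma mxtrace_tensorn (f : 'I_n -> 'M[C]_2) : \tr (tensorn f) = \prod_k \tr (f k).
Proof.
rewrite -(sum_prod_bits (fun k b => f k b b)).
by apply: eq_bigr => i _; rewrite mxE.
Qed.

Lemma adj_tensorn (f : 'I_n -> 'M[C]_2) : adj (tensorn f) = tensorn (fun k => adj (f k)).
Proof.
apply/matrixP => i j; rewrite !mxE rmorph_prod.
by apply: eq_bigr => k _; rewrite !mxE.
Qed.

Lemma tensorn1 : tensorn (fun=> 1%:M) = 1%:M :> 'M[C]_(2 ^ n).
Proof.
apply/matrixP => i j; rewrite !mxE; case: eqVneq => [<-|neq_ij].
  by apply: big1 => k _; rewrite mxE eqxx.
have [k neq_bits | eq_bits] := pickP (fun k => bit i k != bit j k).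
  by rewrite (bigD1 k) //= mxE (negbTE neq_bits) mul0r.
suff /(bij_inj bits_bij) eq_ij : bits i = bits j by rewrite eq_ij eqxx in neq_ij.
by apply/ffunP => k; rewrite !ffunE; apply/eqP/negbFE/eq_bits.
Qed.

Lemma sum_tensorn_ffun (g : 'I_n -> bool -> 'M[C]_2) :
  \sum_(l : {ffun 'I_n -> bool}) tensorn (fun k => g k (l k)) =
  tensorn (fun k => \sum_b g k b).
Proof.
apply/matrixP => i j; rewrite summxE [RHS]mxE.
transitivity (\prod_k \sum_(b : bool) g k b (bit i k) (bit j k)).
  by rewrite bigA_distr_bigA; apply: eq_bigr => l _; rewrite mxE.
by apply: eq_bigr => k _; rewrite summxE.
Qed.

Definition upd (f : 'I_n -> 'M[C]_2) (s : 'I_n) (X : 'M[C]_2) :=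
  fun k => if k == s then X else f k.

Lemma tensorn_updE f s X i j : tensorn (upd f s X) i j =
  X (bit i s) (bit j s) * \prod_(k | k != s) f k (bit i k) (bit j k).
Proof.
rewrite mxE (bigD1 s) //= /upd eqxx; congr (_ * _).
by apply: eq_bigr => k /negbTE ->.
Qed.

Lemma tensorn_updD f s X Y :
  tensorn (upd f s (X + Y)) = tensorn (upd f s X) + tensorn (upd f s Y).
Proof. by apply/matrixP => i j; rewrite [RHS]mxE !tensorn_updE mxE mulrDl. Qed.

Lemma tensorn_updZ f s c X : tensorn (upd f s (c *: X)) = c *: tensorn (upd f s X).
Proof. by apply/matrixP => i j; rewrite [RHS]mxE !tensorn_updE mxE mulrA. Qed.

Lemma tensorn_upd_sum (I : finType) f s (F : I -> 'M[C]_2) :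
  tensorn (upd f s (\sum_a F a)) = \sum_a tensorn (upd f s (F a)).
Proof.
apply/matrixP => i j; rewrite !summxE tensorn_updE summxE big_distrl /=.
by apply: eq_bigr => a _; rewrite tensorn_updE.
Qed.

Lemma tensorn_upd_id f s : tensorn (upd f s (f s)) = tensorn f.
Proof. by apply: eq_tensorn => k; rewrite /upd; case: eqP => // ->. Qed.

End TensorProduct.

Section Adjoint.
Variable R : realType.
Local Notation C := (R[i]).
Variable m : nat.
Implicit Types A B : 'M[C]_m.

Lemma adjmxM A B : adj (A *m B) = adj B *m adj A.
Proof. by rewrite /adj map_mxM trmx_mul. Qed.

Lemma adjmxD A B : adj (A + B) = adj A + adj B.
Proof. by rewrite /adj map_mxD linearD. Qed.

Lemma adjmxN A : adj (- A) = - adj A.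
Proof. by rewrite /adj map_mxN linearN. Qed.

Lemma adjmxZ c A : adj (c *: A) = c^* *: adj A.
Proof. by rewrite /adj map_mxZ linearZ. Qed.

Lemma adjmx1 : adj (1%:M : 'M[C]_m) = 1%:M.
Proof. by rewrite /adj map_mx1 trmx1. Qed.

Lemma adjmxK : involutive (@adj R m).
Proof. by move=> A; apply/matrixP => i j; rewrite !mxE conjCK. Qed.

Lemma adjmx_sum (I : finType) (F : I -> 'M[C]_m) : adj (\sum_i F i) = \sum_i adj (F i).
Proof.
apply/matrixP => i j; rewrite !mxE !summxE rmorph_sum.
by apply: eq_bigr => k _; rewrite !mxE.
Qed.

Lemma mxtrace_adj A : \tr (adj A) = (\tr A)^*.
Proof.
rewrite /adj mxtrace_tr /mxtrace rmorph_sum.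
by apply: eq_bigr => i _; rewrite mxE.
Qed.

Lemma frob2_ge0 A : 0 <= frob2 A.
Proof.
rewrite /frob2 /mxtrace; apply: sumr_ge0 => i _; rewrite mxE.
by apply: sumr_ge0 => j _; rewrite !mxE mulrC mul_conjC_ge0.
Qed.

Lemma frob2D A B :
  frob2 (A + B) = frob2 A + frob2 B + \tr (adj A *m B) + \tr (adj B *m A).
Proof. by rewrite /frob2 adjmxD mulmxDl !mulmxDr !mxtraceD; ring. Qed.

Lemma frob2N A : frob2 (- A) = frob2 A.
Proof. by rewrite /frob2 adjmxN mulNmx mulmxN opprK. Qed.

Lemma frob2Z c A : frob2 (c *: A) = c^* * c * frob2 A.
Proof. by rewrite /frob2 adjmxZ -scalemxAl -scalemxAr !mxtraceZ mulrA. Qed.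

Lemma frob2D_le A B : frob2 (A + B) <= 2%:R * (frob2 A + frob2 B).
Proof.
have parallelogram : frob2 (A + B) + frob2 (A - B) = 2%:R * (frob2 A + frob2 B).
  by rewrite !frob2D frob2N adjmxN mulmxN mulNmx !linearN /=; ring.
by rewrite -parallelogram lerDl frob2_ge0.
Qed.

Lemma frob2_CauchySchwarz A B : frob2 A = 1 -> `|\tr (adj A *m B)| ^+ 2 <= frob2 B.
Proof.
move=> nA; set c := \tr (adj A *m B).
have cBA : \tr (adj B *m A) = c^* by rewrite /c -mxtrace_adj adjmxM adjmxK.
have := frob2_ge0 (B - c *: A).
rewrite frob2D frob2N adjmxN adjmxZ frob2Z nA mulmxN mulNmx !linearN /=.
rewrite -!scalemxAl -!scalemxAr !mxtraceZ cBA -/c normCKC.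
suff -> : frob2 B + c^* * c * 1 + - (c * c^*) + - (c^* * c) = frob2 B - c^* * c.
  by rewrite subr_ge0.
by ring.
Qed.

Lemma frob2_mulmx_unitary_l U A : adj U *m U = 1%:M -> frob2 (U *m A) = frob2 A.
Proof. by move=> uU; rewrite /frob2 adjmxM -mulmxA (mulmxA (adj U)) uU mul1mx. Qed.

Lemma frob2_mulmx_unitary_r U A : U *m adj U = 1%:M -> frob2 (A *m U) = frob2 A.
Proof.
move=> uU; rewrite /frob2 adjmxM mxtrace_mulC -mulmxA (mulmxA U) uU mul1mx.
by rewrite mxtrace_mulC.
Qed.

End Adjoint.

Lemma sum3E (V : nmodType) (F : 'I_3 -> V) :
  \sum_(a < 3) F a = F (@Ordinal 3 0 isT) + F (@Ordinal 3 1 isT) + F (@Ordinal 3 2 isT).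
Proof.
rewrite !big_ord_recl big_ord0 addr0 addrA.
by congr (F _ + F _ + F _); apply: val_inj.
Qed.

Section SingleQubit.
Variable R : realType.
Local Notation C := (R[i]).
Implicit Types (X : 'M[C]_2) (v w : 'I_3 -> C).

Lemma mx2P (A B : 'M[C]_2) :
  A ord0 ord0 = B ord0 ord0 -> A ord0 ord_max = B ord0 ord_max ->
  A ord_max ord0 = B ord_max ord0 -> A ord_max ord_max = B ord_max ord_max -> A = B.
Proof.
move=> e00 e01 e10 e11; apply/matrixP => i j.
have cases2 (k : 'I_2) : k = ord0 \/ k = ord_max.
  by case: k => [[|[|//]] lt_k2]; [left | right]; apply: val_inj.
by case: (cases2 i) => ->; case: (cases2 j) => ->.
Qed.

Lemma mulmx2E (A B : 'M[C]_2) i j :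
  (A *m B) i j = A i ord0 * B ord0 j + A i ord_max * B ord_max j.
Proof.
rewrite mxE !big_ord_recl big_ord0 addr0.
by congr (_ + A i _ * B _ j); apply: val_inj.
Qed.

Lemma mxtrace2E X : \tr X = X ord0 ord0 + X ord_max ord_max.
Proof.
rewrite /mxtrace !big_ord_recl big_ord0 addr0.
by congr (_ + X _ _); apply: val_inj.
Qed.

Lemma ndot1E v i j : ndot1 v i j = \sum_a v a * pauli a i j.
Proof. by rewrite /ndot1 summxE; apply: eq_bigr => a _; rewrite mxE. Qed.

Let sqr_i : ('i : C) ^+ 2 = -1 := sqrCi _.

Lemma pauli_sqr a : pauli a *m pauli a = 1%:M :> 'M[C]_2.
Proof.
by case: a => [[|[|[|//]]] lt_a3]; apply/mx2P; rewrite !(mulmx2E, mxE) /=; ring: sqr_i.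
Qed.

Lemma ndot1_sqr v : ndot1 v *m ndot1 v = (\sum_a v a ^+ 2)%:M.
Proof. by apply/mx2P; rewrite !(mulmx2E, ndot1E, sum3E, mxE) /=; ring: sqr_i. Qed.

Lemma ndot1_sandwich v w : ndot1 v *m ndot1 w *m ndot1 v =
  (2%:R * \sum_a v a * w a) *: ndot1 v - (\sum_a v a ^+ 2) *: ndot1 w.
Proof. by apply/mx2P; rewrite !(mulmx2E, ndot1E, sum3E, mxE) /=; ring: sqr_i. Qed.

Lemma pauli_twirl X : \sum_a pauli a *m X *m pauli a = (2%:R * \tr X)%:M - X.
Proof. by apply/mx2P; rewrite !(mulmx2E, summxE, sum3E, mxtrace2E, mxE) /=; ring: sqr_i. Qed.

Lemma adj_pauli a : adj (pauli a) = pauli a :> 'M[C]_2.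
Proof.
have conjNi : (- 'i : C)^* = 'i by rewrite rmorphN -[RHS]opprK; congr (- _); exact: conjCi.
by case: a => [[|[|[|//]]] lt_a3]; apply/mx2P;
  rewrite !mxE /= ?(conjNi, conjCi, rmorphN, rmorph1, rmorph0, opprK).
Qed.

Definition cvec (w : 'I_3 -> R) : 'I_3 -> C := fun a => (w a)%:C%C.

Lemma sum_cvec_sqr (w : 'I_3 -> R) : unit3 w -> \sum_a cvec w a ^+ 2 = 1.
Proof.
by move=> uw; under eq_bigr do rewrite -rmorphXn; rewrite -rmorph_sum uw rmorph1.
Qed.

Lemma sum_cvec_mul (v w : 'I_3 -> R) : \sum_a cvec v a * cvec w a = (dot3 v w)%:C%C.
Proof. by under eq_bigr do rewrite -rmorphM; rewrite -rmorph_sum. Qed.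

Lemma conj_cvec (w : 'I_3 -> R) a : (cvec w a)^* = cvec w a.
Proof. exact: conjc_real. Qed.

Lemma adj_ndot1 (w : 'I_3 -> R) : adj (ndot1 (cvec w)) = ndot1 (cvec w).
Proof.
rewrite adjmx_sum; apply: eq_bigr => a _.
by rewrite adjmxZ adj_pauli conj_cvec.
Qed.

End SingleQubit.

Section Bloch.
Variable R : realType.
Local Notation C := (R[i]).
Implicit Types (X : 'M[C]_2) (m v w : 'I_3 -> R).

Lemma dot3C v w : dot3 v w = dot3 w v.
Proof. by apply: eq_bigr => a _; rewrite mulrC. Qed.

Lemma dot3_sign (b : bool) m v : dot3 (fun a => (-1) ^+ b * m a) v = (-1) ^+ b * dot3 m v.
Proof. by rewrite /dot3 mulr_sumr; apply: eq_bigr => a _; rewrite mulrA. Qed.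

Lemma unit3_sign (b : bool) m : unit3 m -> unit3 (fun a => (-1) ^+ b * m a).
Proof.
rewrite /unit3 => um; rewrite -[RHS]um.
by apply: eq_bigr => a _; rewrite exprMn sqrr_sign mul1r.
Qed.

Lemma ndot1N w : ndot1 (cvec (fun a => - w a)) = - ndot1 (cvec w).
Proof. by rewrite -sumrN; apply: eq_bigr => a _; rewrite /cvec rmorphN scaleNr. Qed.

Lemma eq_bloch_state v w : v =1 w -> bloch_state v = bloch_state w.
Proof. by move=> vw; rewrite /bloch_state /ndot1; under eq_bigr do rewrite vw. Qed.

Lemma mxtrace_bloch w : \tr (bloch_state w) = 1.
Proof. by rewrite mxtrace2E !(mxE, ndot1E, sum3E) /=; field. Qed.

Lemma adj_bloch w : adj (bloch_state w) = bloch_state w.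
Proof. by rewrite adjmxZ adjmxD adjmx1 adj_ndot1 fmorphV rmorph_nat. Qed.

Lemma bloch_idem w : unit3 w -> bloch_state w *m bloch_state w = bloch_state w.
Proof.
move=> /sum_cvec_sqr uw; rewrite /bloch_state -/(cvec w).
rewrite -scalemxAl -scalemxAr scalerA mulmxDl !mulmxDr !mul1mx !mulmx1 ndot1_sqr uw.
rewrite (addrC (ndot1 _)) -mulr2n -scalerMnr scalerMnl; congr (_ *: _).
by rewrite -mulr_natr; field.
Qed.

Lemma bloch_state_antipodal w : bloch_state w + bloch_state (fun a => - w a) = 1%:M.
Proof.
rewrite /bloch_state -!/(cvec _) ndot1N -scalerDr addrACA subrr addr0.
by rewrite -mulr2n -scalerMnr scalerMnl -mulr_natr mulVf ?pnatr_eq0 // scale1r.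
Qed.

Lemma sum_bloch_sign m : \sum_(b : bool) bloch_state (fun a => (-1) ^+ b * m a) = 1%:M.
Proof.
rewrite big_bool /= addrC -(bloch_state_antipodal m).
by congr (_ + _); apply: eq_bloch_state => a /=; rewrite ?expr0 ?expr1 ?mul1r ?mulN1r.
Qed.

Lemma ndot1_conj_bloch v w : unit3 v -> dot3 w v = 0 ->
  ndot1 (cvec v) *m bloch_state w *m ndot1 (cvec v) = bloch_state (fun a => - w a).
Proof.
move=> /sum_cvec_sqr uv; rewrite dot3C => vw.
rewrite /bloch_state -!/(cvec _) ndot1N -scalemxAr -scalemxAl mulmxDr mulmxDl mulmx1.
by rewrite ndot1_sqr ndot1_sandwich uv sum_cvec_mul vw mulr0 scale0r sub0r scale1r.
Qed.

Definition depol1 X : 'M[C]_2 := 4%:R^-1 *: (X + \sum_a pauli a *m X *m pauli a).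

Lemma depol1E X : depol1 X = (2%:R^-1 * \tr X)%:M.
Proof.
rewrite /depol1 pauli_twirl addrC subrK scale_scalar_mx; congr _%:M.
by field.
Qed.

Lemma depol1_bloch v w : unit3 v -> dot3 w v = 0 -> depol1 (bloch_state w) =
  2%:R^-1 *: (bloch_state w + ndot1 (cvec v) *m bloch_state w *m ndot1 (cvec v)).
Proof.
move=> uv wv; rewrite depol1E mxtrace_bloch mulr1 ndot1_conj_bloch //.
by rewrite bloch_state_antipodal scale_scalar_mx mulr1.
Qed.

End Bloch.

Section QubitOperators.
Variable R : realType.
Local Notation C := (R[i]).
Variable n : nat.
Local Notation M := ('M[C]_(2 ^ n)).
Implicit Types (s t : 'I_n) (A B V : 'M[C]_2) (X Y Z : M).

Lemma on_qubitM s A B : on_qubit s A *m on_qubit s B = on_qubit s (A *m B) :> M.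
Proof. by rewrite tensornM; apply: eq_tensorn => k; case: (k == s); rewrite ?mulmx1. Qed.

Lemma on_qubit1 s : on_qubit s 1%:M = 1%:M :> M.
Proof. by rewrite -(tensorn1 R n); apply: eq_tensorn => k; case: (k == s). Qed.

Lemma adj_on_qubit s A : adj (on_qubit s A) = on_qubit s (adj A) :> M.
Proof. by rewrite adj_tensorn; apply: eq_tensorn => k; case: (k == s); rewrite ?adjmx1. Qed.

Lemma on_qubit_commute s t A B : t != s ->
  on_qubit t A *m on_qubit s B = on_qubit s B *m on_qubit t A :> M.
Proof.
move=> nts; rewrite !tensornM; apply: eq_tensorn => k.
case: (eqVneq k s) => [->|_]; first by rewrite eq_sym (negbTE nts) mulmx1 mul1mx.
by case: (k == t); rewrite ?mulmx1 ?mul1mx.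
Qed.

Lemma on_qubit_sandwich s A B (f : 'I_n -> 'M[C]_2) :
  on_qubit s A *m tensorn f *m on_qubit s B = tensorn (upd f s (A *m f s *m B)).
Proof.
rewrite !tensornM; apply: eq_tensorn => k; rewrite /upd.
by case: (eqVneq k s) => [->|_]; rewrite ?mulmx1 ?mul1mx.
Qed.

Lemma ndot_on_qubit (v : 'I_3 -> C) s : ndot v s = on_qubit s (ndot1 v) :> M.
Proof.
rewrite /on_qubit -[fun l => _]/(upd (fun=> 1%:M) s (ndot1 v)) tensorn_upd_sum.
by apply: eq_bigr => a _; rewrite tensorn_updZ.
Qed.

Lemma depol_tensorn s (f : 'I_n -> 'M[C]_2) :
  depol s (tensorn f) = tensorn (upd f s (depol1 (f s))).
Proof.
rewrite tensorn_updZ tensorn_updD tensorn_upd_sum tensorn_upd_id.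
by congr (_ *: (_ + _)); apply: eq_bigr => a _; rewrite on_qubit_sandwich.
Qed.

Lemma mxtrace_mul_depol s X Y : \tr (X *m depol s Y) = \tr (depol s X *m Y).
Proof.
rewrite /depol -scalemxAr -scalemxAl !mxtraceZ mulmxDr mulmxDl !mxtraceD.
rewrite mulmx_sumr mulmx_suml !raddf_sum /=; congr (_ * (_ + _)).
by apply: eq_bigr => a _; rewrite !mulmxA mxtrace_mulC !mulmxA.
Qed.

Lemma adj_sigma t a : adj (sigma t a) = sigma t a :> M.
Proof. by rewrite adj_on_qubit adj_pauli. Qed.

Lemma sigma_sqr t a : sigma t a *m sigma t a = 1%:M :> M.
Proof. by rewrite on_qubitM pauli_sqr on_qubit1. Qed.

Lemma frob2_sigma_sandwich t a Z : frob2 (sigma t a *m Z *m sigma t a) = frob2 Z.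
Proof.
by rewrite frob2_mulmx_unitary_r ?frob2_mulmx_unitary_l // adj_sigma sigma_sqr.
Qed.

Lemma frob2_depol_le t Z : frob2 (depol t Z) <= frob2 Z.
Proof.
rewrite /depol frob2Z fmorphV rmorph_nat sum3E !addrA -(addrA (Z + _)).
set f := frob2 Z; set W := fun a => sigma t a *m Z *m sigma t a.
have fW a : frob2 (W a) = f by exact: frob2_sigma_sandwich.
have le_pair (P Q : M) : frob2 P = f -> frob2 Q = f -> frob2 (P + Q) <= 4%:R * f.
  move=> fP fQ; apply: le_trans (frob2D_le P Q) _.
  by rewrite fP fQ (_ : 2%:R * (f + f) = 4%:R * f) ?lexx //; ring.
have le16 : frob2 (Z + W (@Ordinal 3 0 isT) +
                   (W (@Ordinal 3 1 isT) + W (@Ordinal 3 2 isT))) <= 16%:R * f.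
  apply: le_trans (frob2D_le _ _) _.
  rewrite (_ : 16%:R * f = 2%:R * (4%:R * f + 4%:R * f)); last by ring.
  by rewrite ler_wpM2l ?ler0n //; apply: lerD; apply: le_pair.
apply: le_trans (ler_wpM2l _ le16) _; first by rewrite mulr_ge0 ?invr_ge0 ?ler0n.
by rewrite (_ : _ * _ * (16%:R * f) = f) //; field.
Qed.

Lemma comm_on_qubit_depol s t V Y : t != s ->
  comm (on_qubit s V) (depol t Y) = depol t (comm (on_qubit s V) Y).
Proof.
move=> nts; set P := on_qubit s V.
have commP a : P *m sigma t a = sigma t a *m P by rewrite (on_qubit_commute _ _ nts).
rewrite /comm /depol -scalemxAr -scalemxAl -scalerBr mulmxDr mulmxDl.
rewrite mulmx_sumr mulmx_suml opprD addrACA -sumrB.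
congr (_ *: (_ + _)); apply: eq_bigr => a _.
by rewrite mulmxBr mulmxBl !mulmxA commP -!mulmxA commP.
Qed.

Lemma frob2_comm_foldr_depol_le s V Y (ts : seq 'I_n) : s \notin ts ->
  frob2 (comm (on_qubit s V) (foldr (@depol R n) Y ts)) <= frob2 (comm (on_qubit s V) Y).
Proof.
elim: ts => [|t ts IH] //= /[!(in_cons, negb_or)] /andP[nst nsts].
rewrite comm_on_qubit_depol 1?eq_sym //.
exact: le_trans (frob2_depol_le _ _) (IH nsts).
Qed.

End QubitOperators.

Lemma sqr_sum_le_card_sum_sqr (F : numDomainType) (I : finType) (a : I -> F) :
  (forall i, 0 <= a i) -> (\sum_i a i) ^+ 2 <= #|I|%:R * \sum_i a i ^+ 2.
Proof.
move=> a_ge0.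
have amgm i j : 2%:R * (a i * a j) <= a i ^+ 2 + a j ^+ 2.
  rewrite -subr_ge0 (_ : _ - _ = (a i - a j) ^+ 2); last by ring.
  by rewrite real_exprn_even_ge0 // rpredB // ger0_real.
have sum_const (c : F) : \sum_(j : I) c = #|I|%:R * c.
  by rewrite sumr_const mulr_natl; congr (_ *+ _); apply: eq_card.
rewrite -(@ler_pM2l _ 2%:R) ?ltr0n //.
apply: le_trans (_ : _ <= \sum_i \sum_j (a i ^+ 2 + a j ^+ 2)) _.
  rewrite expr2 big_distrl /= mulr_sumr; apply: ler_sum => i _.
  by rewrite big_distrr /= mulr_sumr; apply: ler_sum => j _.
rewrite le_eqVlt; apply/orP; left; apply/eqP.
under eq_bigr do rewrite big_split /= sum_const.
by rewrite big_split /= sum_const -mulr_sumr; ring.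
Qed.

Lemma mean_le_sqrt_mean_sqr (F : numClosedFieldType) (I : finType) (a : I -> F) :
  (forall i, 0 <= a i) -> #|I|%:R^-1 * \sum_i a i <= sqrtC (#|I|%:R^-1 * \sum_i a i ^+ 2).
Proof.
move=> a_ge0.
have [card0 | card_gt0] := posnP #|I|.
  by rewrite card0 invr0 !mul0r sqrtC0.
have N_gt0 : 0 < #|I|%:R :> F by rewrite ltr0n.
have mean_ge0 : 0 <= #|I|%:R^-1 * \sum_i a i.
  by apply: mulr_ge0; [rewrite invr_ge0 ltW | apply: sumr_ge0].
have sum_sqr_ge0 : 0 <= \sum_i a i ^+ 2 by apply: sumr_ge0 => i _; rewrite exprn_ge0.
rewrite -(sqrCK mean_ge0) ler_sqrtC ?nnegrE ?exprn_ge0 //; last first.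
  by apply: mulr_ge0; rewrite // invr_ge0 ltW.
rewrite exprMn; apply: le_trans (ler_wpM2l _ (sqr_sum_le_card_sum_sqr a_ge0)) _.
  by rewrite exprn_ge0 // invr_ge0 ltW.
by rewrite expr2 -!mulrA mulKf ?lt0r_neq0.
Qed.

Section ProductBasis.
Variable R : realType.
Local Notation C := (R[i]).
Variable n : nat.
Local Notation M := ('M[C]_(2 ^ n)).
Variable nperp : 'I_n -> 'I_3 -> R.
Hypothesis unit_nperp : forall j, unit3 (nperp j).
Local Notation rho := (basis_state nperp).

Lemma adj_basis_state l : adj (rho l) = rho l.
Proof. by rewrite adj_tensorn; apply: eq_tensorn => k; rewrite adj_bloch. Qed.

Lemma basis_state_idem l : rho l *m rho l = rho l.
Proof. by rewrite tensornM; apply: eq_tensorn => k; apply/bloch_idem/unit3_sign. Qed.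

Lemma mxtrace_basis_state l : \tr (rho l) = 1.
Proof. by rewrite mxtrace_tensorn; apply: big1 => k _; rewrite mxtrace_bloch. Qed.

Lemma sum_basis_state : \sum_l rho l = 1%:M.
Proof.
rewrite (sum_tensorn_ffun (fun j b => bloch_state (fun a => (-1) ^+ b * nperp j a))).
by rewrite -(tensorn1 R n); apply: eq_tensorn => k; rewrite sum_bloch_sign.
Qed.

Lemma normC_expv_basis_state_le l (D : M) :
  `|expv (rho l) D| ^+ 2 <= \tr (adj D *m rho l *m D).
Proof.
have frob2_rho : frob2 (rho l) = 1.
  by rewrite /frob2 adj_basis_state basis_state_idem mxtrace_basis_state.
have := frob2_CauchySchwarz (rho l *m D) frob2_rho.
rewrite adj_basis_state mulmxA basis_state_idem /frob2 adjmxM adj_basis_state.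
by rewrite -mulmxA (mulmxA (rho l)) basis_state_idem mulmxA.
Qed.

Lemma bessel_basis_state (D : M) : \sum_l `|expv (rho l) D| ^+ 2 <= frob2 D.
Proof.
apply: le_trans (ler_sum _ (fun l _ => normC_expv_basis_state_le l D)) _.
by rewrite -raddf_sum -mulmx_suml -mulmx_sumr sum_basis_state mulmx1.
Qed.

End ProductBasis.

Section DepolarizingStep.
Variable R : realType.
Local Notation C := (R[i]).
Variable n : nat.
Local Notation M := ('M[C]_(2 ^ n)).
Variable nperp : 'I_n -> 'I_3 -> R.
Hypothesis unit_nperp : forall j, unit3 (nperp j).
Local Notation rho := (basis_state nperp).
Variables (s : 'I_n) (v : 'I_3 -> R).
Hypothesis unit_v : unit3 v.
Hypothesis nperp_v : dot3 (nperp s) v = 0.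
Local Notation P := (ndot (cvec v) s).

Lemma ndot_sqr : P *m P = 1%:M.
Proof. by rewrite ndot_on_qubit on_qubitM ndot1_sqr sum_cvec_sqr // on_qubit1. Qed.

Lemma adj_ndot : adj P = P.
Proof. by rewrite ndot_on_qubit adj_on_qubit adj_ndot1. Qed.

Lemma depol_basis_state l : depol s (rho l) = 2%:R^-1 *: (rho l + P *m rho l *m P).
Proof.
rewrite /basis_state depol_tensorn ndot_on_qubit on_qubit_sandwich.
rewrite -[in RHS](tensorn_upd_id _ s) -tensorn_updD -tensorn_updZ.
by rewrite (depol1_bloch unit_v) // dot3_sign nperp_v mulr0.
Qed.

Lemma expv_sub_depol l Y :
  expv (rho l) Y - expv (rho l) (depol s Y) = 2%:R^-1 * expv (rho l) (Y - P *m Y *m P).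
Proof.
have cyclic : \tr (P *m rho l *m P *m Y) = \tr (rho l *m (P *m Y *m P)).
  by rewrite -!mulmxA mxtrace_mulC !mulmxA.
rewrite /expv mxtrace_mul_depol depol_basis_state -scalemxAl mxtraceZ.
by rewrite mulmxDl mxtraceD cyclic mulmxBr raddfB /=; field.
Qed.

Lemma frob2_sub_conj Y : frob2 (Y - P *m Y *m P) = frob2 (comm P Y).
Proof.
have -> : Y - P *m Y *m P = - (comm P Y *m P).
  by rewrite /comm mulmxBl -(mulmxA Y) ndot_sqr mulmx1 opprB.
by rewrite frob2N frob2_mulmx_unitary_r // adj_ndot ndot_sqr.
Qed.

Lemma mean_expv_sub_depol_le Y :
  (2 ^ n)%:R^-1 * \sum_l `|expv (rho l) Y - expv (rho l) (depol s Y)|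
  <= sqrtC ((2 ^ (n + 2))%:R^-1 * frob2 (comm P Y)).
Proof.
have card_ffun2 : #|{ffun 'I_n -> bool}| = (2 ^ n)%N.
  by rewrite card_ffun card_bool card_ord.
rewrite -[X in X%:R^-1 * _]card_ffun2.
apply: le_trans (mean_le_sqrt_mean_sqr (fun l => normr_ge0 _)) _.
rewrite ler_sqrtC ?nnegrE; first last.
- by apply: mulr_ge0; rewrite ?invr_ge0 ?ler0n ?frob2_ge0.
- by apply: mulr_ge0; rewrite ?invr_ge0 ?ler0n //; apply: sumr_ge0 => l _; rewrite exprn_ge0.
under eq_bigr do rewrite expv_sub_depol normrM exprMn.
rewrite -mulr_sumr card_ffun2 -frob2_sub_conj mulrA.
have -> : (2 ^ (n + 2))%:R^-1 = (2 ^ n)%:R^-1 * `|2%:R^-1| ^+ 2 :> C.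
  by rewrite expnD natrM normfV normr_nat invfM exprVn -natrX.
apply: ler_wpM2l (bessel_basis_state unit_nperp _).
by rewrite mulr_ge0 ?invr_ge0 ?ler0n ?exprn_ge0.
Qed.

End DepolarizingStep.

Lemma mean_expv_sub_depol_foldr_le (R : realType) n (nperp nv : 'I_n -> 'I_3 -> R)
    (O : 'M[R[i]]_(2 ^ n)) (ts : seq 'I_n) :
  (forall j, unit3 (nperp j)) -> uniq ts ->
  (forall s, s \in ts -> unit3 (nv s) /\ dot3 (nperp s) (nv s) = 0) ->
  (2 ^ n)%:R^-1 * \sum_l
     `|expv (basis_state nperp l) O - expv (basis_state nperp l) (foldr (@depol R n) O ts)|
  <= \sum_(s <- ts) sqrtC ((2 ^ (n + 2))%:R^-1 * frob2 (comm (ndot (cvec (nv s)) s) O)).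
Proof.
move=> unit_nperp; elim: ts => [|s ts IH] /=.
  by move=> _ _; rewrite big_nil big1 ?mulr0 // => l _; rewrite subrr normr0.
move=> /andP[s_notin_ts uniq_ts] nv_ts.
have [unit_nvs nperp_nvs] := nv_ts s (mem_head _ _).
set Y := foldr _ O ts; set rho := basis_state nperp.
rewrite big_cons addrC.
apply: le_trans (_ : _ <= (2 ^ n)%:R^-1 * \sum_l
   (`|expv (rho l) O - expv (rho l) Y| + `|expv (rho l) Y - expv (rho l) (depol s Y)|)) _.
  by rewrite ler_wpM2l ?invr_ge0 ?ler0n //; apply: ler_sum => l _; apply: ler_distD.
rewrite big_split mulrDr /=; apply: lerD.
  by apply: IH => // t t_ts; apply: nv_ts; rewrite in_cons t_ts orbT.
apply: le_trans (mean_expv_sub_depol_le unit_nperp unit_nvs nperp_nvs Y) _.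
rewrite ler_sqrtC ?nnegrE ?mulr_ge0 ?invr_ge0 ?ler0n ?frob2_ge0 //.
rewrite ler_wpM2l ?invr_ge0 ?ler0n // ndot_on_qubit.
exact: frob2_comm_foldr_depol_le.
Qed.

Theorem theorem2 (R : realType) (n : nat) (U : 'M[R[i]]_(2 ^ n))
  (alpha : {set 'I_(2 * n)}) (b : int) (S : {set 'I_n})
  (nv : 'I_n -> 'I_3 -> R) (M : 'I_n -> 'M[R[i]]_3) (nperp : 'I_n -> 'I_3 -> R) :
  matchgate U ->
  let B := ('i ^ b) *: majorana_conf alpha in
  adj B = B ->
  (forall s, s \in S -> unit3 (nv s)) ->
  (forall s, s \in S -> forall v : 'I_3 -> R[i],
      (2 ^ (n + 2))%:R^-1 * frob2 (comm (ndot v s) (adj U *m B *m U)) = qform v (M s)) ->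
  (forall j, unit3 (nperp j)) ->
  (forall j, j \in S -> dot3 (nperp j) (nv j) = 0) ->
  let O := adj U *m B *m U in
  (2 ^ n)%:R^-1 *
    \sum_(l : {ffun 'I_n -> bool})
       `| expv (basis_state nperp l) O - expv (basis_state nperp l) (depolS S O) |
  <= \sum_(s in S) sqrtC (qform (fun a => (nv s a)%:C%C) (M s)).
Proof.
move=> _ B _ unit_nv qform_M unit_nperp nperp_nv /=.
under [X in _ <= X]eq_bigr => s sS do rewrite -(qform_M s sS).
rewrite -[X in _ <= X]big_enum /=.
apply: mean_expv_sub_depol_foldr_le => [//||s]; first exact: enum_uniq.
by rewrite mem_enum => sS; split; [apply: unit_nv | apply: nperp_nv].
Qed.
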